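(* Let $R$ be a commutative ring containing $\mathbb Q$, let $f\in1+xR[[x]]$, and for $n\ge0$ set $$P_n:=\sum_{s=0}^n\frac{(-1)^s}{s!\,(n-s)!}\prod_{k=-(n-s)}^{s}f(kx)\in R[[x]].$$ Then the coefficients of $x^0,\dots,x^{n-1}$ in $P_n$ vanish and the coefficient of $x^n$ equals $(-1)^n$ times the coefficient of $x^n$ in $f^{n+1}$, i.e. $$P_n=(-1)^n\Bigl(\frac1{n!}\frac{d^n}{dx^n}\Big|_{x=0}f(x)^{n+1}\Bigr)x^n+O(x^{n+1}).$$ *)

(* Formal power series over R are coefficient sequences nat -> R. *)
From mathcomp Require Import all_boot all_order all_algebra.
Set Implicit Arguments. Unset Strict Implicit. Unset Printing Implicit Defensive.
Import Order.TTheory GRing.Theory Num.Theory.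
Local Open Scope ring_scope.

Definition pser (R : Type) := nat -> R.

Section PS.
Variable R : comAlgType rat.

Definition ps_one : pser R := fun m => if m is 0%N then 1 else 0.

Definition ps_mul (a b : pser R) : pser R :=
  fun m => \sum_(i < m.+1) a i * b (m - i)%N.

Definition ps_prod (l : seq (pser R)) : pser R := foldr ps_mul ps_one l.

Definition ps_pow (f : pser R) (n : nat) : pser R := iter n (ps_mul f) ps_one.

(* f(k x): coefficient j is k^j f_j *)
Definition ps_dil (k : int) (f : pser R) : pser R :=
  fun j => (k%:~R) ^+ j * f j.

(* the integers -(n-s), ..., s *)
Definition krange (n s : nat) : seq int :=
  [seq (i%:Z - (n - s)%:Z)%R | i <- iota 0 n.+1].

Definition Pn (f : pser R) (n : nat) : pser R :=
  fun m => \sum_(s < n.+1)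
    (((-1) ^+ s / ((s`!)%:R * ((n - s)`!)%:R)) : rat) *:
      ps_prod [seq ps_dil k f | k <- krange n s] m.

End PS.

From mathcomp Require Import all_boot all_order all_algebra.
From mathcomp Require Import ring zify.
Import GRing.Theory Num.Theory.
Local Open Scope ring_scope.
Set Implicit Arguments. Unset Strict Implicit.

(* Put t := n - s. The coefficient of x^m in the product of the f((i - t) x),
   0 <= i <= n, is a polynomial Q_m(t) of degree at most m whose t^m-coefficient
   is (-1)^m [x^m] f^(n+1). The x^m-coefficient of P_n is then
   ((-1)^n / n!) sum_t (-1)^t C(n, t) Q_m(t), an n-th finite difference, which
   picks out the t^n-coefficient of Q_m: zero for m < n, and (-1)^n [x^n] f^(n+1)
   for m = n. *)

Section AlternatingBinomialSums.
Variable R : comNzRingType.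

Definition altbin_sum (n : nat) (p : nat -> R) : R :=
  \sum_(t < n.+1) (-1) ^+ t * 'C(n, t)%:R * p t.

Lemma altbin_sum_expS n k :
  altbin_sum n.+1 (fun t => t%:R ^+ k.+1) =
  - n.+1%:R * \sum_(j < k.+1) 'C(k, j)%:R * altbin_sum n (fun t => t%:R ^+ j).
Proof.
rewrite /altbin_sum big_ord_recl /= expr0n /= mulr0 add0r.
under [in RHS]eq_bigr do rewrite mulr_sumr.
rewrite exchange_big /= mulr_sumr; apply: eq_bigr => t _.
have binS : ('C(n.+1, t.+1)%:R * t.+1%:R : R) = n.+1%:R * 'C(n, t)%:R.
  by rewrite -!natrM mulnC -mul_bin_diag.
have expS : \sum_(j < k.+1) 'C(k, j)%:R * ((-1) ^+ t * 'C(n, t)%:R * (t%:R : R) ^+ j)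
    = (-1) ^+ t * 'C(n, t)%:R * t.+1%:R ^+ k.
  rewrite -natr1 exprD1n mulr_sumr; apply: eq_bigr => j _.
  by rewrite -mulr_natl; ring.
rewrite expS /bump /= add1n.
transitivity (- ((-1) ^+ t * t.+1%:R ^+ k) * ('C(n.+1, t.+1)%:R * t.+1%:R) : R).
  by rewrite !exprS; ring.
by rewrite binS; ring.
Qed.

Lemma altbin_sum_exp n k : (k <= n)%N ->
  altbin_sum n (fun t => t%:R ^+ k) = if k == n then (-1) ^+ n * n`!%:R else 0.
Proof.
elim: n k => [|n IHn] [|k] //= hk.
- by rewrite /altbin_sum big_ord1 !expr0 mulr1 mul1r.
- rewrite /altbin_sum; have := exprBn (1 : R) 1 n.+1.
  rewrite subrr expr0n /= => /esym; apply: etrans.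
  by apply: eq_bigr => i _; rewrite !expr1n !mulr1 mulr_natr.
rewrite altbin_sum_expS eqSS.
have [ltkn | ltnk | ->] := ltngtP k n.
- rewrite big1 ?mulr0 // => j _.
  by rewrite IHn ?(ltn_eqF (leq_trans (ltn_ord j) ltkn)) ?mulr0 // ltnW ?(leq_trans (ltn_ord j)).
- by move: hk; rewrite ltnS leqNgt ltnk.
rewrite big_ord_recr /= big1 ?add0r => [|j _].
  by rewrite IHn // eqxx binn mul1r factS natrM exprS; ring.
by rewrite IHn ?(ltn_eqF (ltn_ord j)) ?mulr0 // ltnW.
Qed.

Lemma altbin_sum_horner n (p : {poly R}) : (size p <= n.+1)%N ->
  altbin_sum n (fun t => p.[t%:R]) = (-1) ^+ n * n`!%:R * p`_n.
Proof.
move=> szp; rewrite /altbin_sum.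
under eq_bigr do rewrite (horner_coef_wide _ szp) mulr_sumr.
rewrite exchange_big /=.
rewrite (eq_bigr (fun k : 'I_n.+1 => p`_k * altbin_sum n (fun t => t%:R ^+ k))); last first.
  by move=> k _; rewrite mulr_sumr; apply: eq_bigr => t _; ring.
rewrite big_ord_recr /= big1 ?add0r => [|k _].
  by rewrite altbin_sum_exp // eqxx mulrC.
by rewrite altbin_sum_exp ?(ltn_eqF (ltn_ord k)) ?mulr0 // ltnW.
Qed.

End AlternatingBinomialSums.

Section TopCoefficient.
Variable R : nzRingType.

Lemma coefM_top (p q : {poly R}) i j : (size p <= i.+1)%N -> (size q <= j.+1)%N ->
  (p * q)`_(i + j) = p`_i * q`_j.
Proof.
move=> szp szq; rewrite coefM (bigD1 (Ordinal (leq_addr j i : i < (i + j).+1)%N)) //= addKn.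
rewrite big1 ?addr0 // => l; rewrite -val_eqE /= => neq_li.
have [lt_li | le_il] := ltnP l i.
  by rewrite [q`_ _]nth_default ?mulr0 //; apply: leq_trans szq _; lia.
by rewrite [p`_l]nth_default ?mul0r //; apply: leq_trans szp _; lia.
Qed.

Lemma size_CsubX (c : R) : size (c%:P - 'X) = 2%N.
Proof. by rewrite -opprB size_polyN size_XsubC. Qed.

Lemma size_CsubX_exp (c : R) a : (size ((c%:P - 'X) ^+ a) <= a.+1)%N.
Proof. by have := size_poly_exp_leq (c%:P - 'X) a; rewrite size_CsubX mul1n. Qed.

Lemma coef_CsubX_exp (c : R) a : ((c%:P - 'X) ^+ a)`_a = (-1) ^+ a.
Proof.
elim: a => [|a IHa]; first by rewrite expr0 coef1.
rewrite exprSr -addn1 coefM_top ?IHa ?size_CsubX_exp ?size_CsubX //.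
by rewrite coefB coefC coefX sub0r addn1 exprSr.
Qed.

End TopCoefficient.

Lemma sign_div_fact_bin (F : numFieldType) n t : (t <= n)%N ->
  (-1) ^+ (n - t) / ((n - t)`!%:R * t`!%:R) =
  (-1) ^+ n / n`!%:R * ((-1) ^+ t * 'C(n, t)%:R) :> F.
Proof.
move=> le_tn.
have fact_neq0 k : (k`!%:R : F) != 0 by rewrite pnatr_eq0 -lt0n fact_gt0.
have bin_neq0 : ('C(n, t)%:R : F) != 0 by rewrite pnatr_eq0 -lt0n bin_gt0.
have signK : ((-1) ^+ t * (-1) ^+ t : F) = 1 by rewrite -exprMn mulrNN mulr1 expr1n.
have -> : ((-1) ^+ n : F) = (-1) ^+ (n - t) * (-1) ^+ t by rewrite -exprD subnK.
rewrite -(bin_fact le_tn) !natrM.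
transitivity ((-1) ^+ (n - t) * ((-1) ^+ t * (-1) ^+ t) / ((n - t)`!%:R * t`!%:R) : F).
  by rewrite signK mulr1.
by field; rewrite bin_neq0 !fact_neq0.
Qed.

Lemma scale_sign_nat (S : pzRingType) (A : lalgType S) t k (x : A) :
  ((-1) ^+ t * k%:R : S) *: x = (-1) ^+ t * k%:R * x.
Proof. by rewrite -mulr_algl -in_algE rmorphM rmorph_sign rmorph_nat. Qed.

Section DilatedProducts.
Variables (R : comAlgType rat) (f : pser R).

(* [(dil_prod_poly L m).[t]] is the coefficient of [x^m] in the product of the
   [f((i - t) x)] for [i] in [L]. *)
Fixpoint dil_prod_poly (L : seq nat) (m : nat) : {poly R} :=
  match L with
  | [::] => if m is 0%N then 1 else 0
  | i :: L' => \sum_(a < m.+1) (i%:R%:P - 'X) ^+ a * ((f a)%:P * dil_prod_poly L' (m - a))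
  end.

Lemma dil_prod_poly_horner L t m :
  ps_prod [seq ps_dil k f | k <- [seq (i%:Z - t%:Z)%R | i <- L]] m =
  (dil_prod_poly L m).[t%:R].
Proof.
elim: L m => [|i L IHL] m /=; first by case: m => [|m]; rewrite /= hornerE.
rewrite /ps_mul horner_sum; apply: eq_bigr => a _.
by rewrite !hornerE -IHL /ps_dil rmorphB.
Qed.

Lemma size_dil_prod_poly L m : (size (dil_prod_poly L m) <= m.+1)%N.
Proof.
elim: L m => [|i L IHL] m /=; first by case: m => [|m]; rewrite ?size_poly1 ?size_poly0.
apply: (big_ind (fun p : {poly R} => size p <= m.+1)%N) => [|p q szp szq|a _].
- by rewrite size_poly0.
- by rewrite (leq_trans (size_polyD _ _)) // geq_max szp szq.
have sz_exp := size_CsubX_exp (i%:R : R) a.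
have sz_tail : (size ((f a)%:P * dil_prod_poly L (m - a))%R <= (m - a).+1)%N.
  by rewrite mul_polyC (leq_trans (size_scale_leq _ _)) ?IHL.
have := size_polyMleq ((i%:R%:P - 'X) ^+ a) ((f a)%:P * dil_prod_poly L (m - a)).
have := ltn_ord a; move: sz_exp sz_tail.
set x := size _; set y := size _; set z := size _; lia.
Qed.

(* Only the top term [(-t)^a] of each [(i - t)^a] reaches [t^m]. *)
Lemma coef_dil_prod_poly L m :
  (dil_prod_poly L m)`_m = (-1) ^+ m * ps_pow f (size L) m.
Proof.
elim: L m => [|i L IHL] m /=.
  by case: m => [|m]; rewrite /ps_pow /ps_one /= ?coef1 ?coef0 ?mulr1 ?mulr0.
rewrite coef_sum /ps_pow /= -/(ps_pow f (size L)) /ps_mul mulr_sumr.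
apply: eq_bigr => a _.
have le_am : (a <= m)%N by rewrite -ltnS.
have sz_tail : (size ((f a)%:P * dil_prod_poly L (m - a))%R <= (m - a).+1)%N.
  by rewrite mul_polyC (leq_trans (size_scale_leq _ _)) ?size_dil_prod_poly.
have := coefM_top (size_CsubX_exp (i%:R : R) a) sz_tail; rewrite subnKC // => ->.
have -> : ((-1) ^+ m : R) = (-1) ^+ a * (-1) ^+ (m - a) by rewrite -exprD subnKC.
by rewrite coef_CsubX_exp coefCM IHL; ring.
Qed.

Lemma Pn_dil_prod_poly n m : (m <= n)%N ->
  Pn f n m = (dil_prod_poly (iota 0 n.+1) m)`_n.
Proof.
move=> le_mn; rewrite /Pn.
under eq_bigr do rewrite /krange dil_prod_poly_horner.
set Q := dil_prod_poly _ m.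
have szQ : (size Q <= n.+1)%N by rewrite (leq_trans (size_dil_prod_poly _ _)).
rewrite (reindex_inj rev_ord_inj) /=.
under eq_bigr => t _.
  have le_tn : (t <= n)%N by rewrite -ltnS.
  rewrite subSS subKn // (@sign_div_fact_bin rat) // -scalerA scale_sign_nat.
over.
rewrite -scaler_sumr -/(altbin_sum n (fun t => Q.[t%:R])) altbin_sum_horner //.
rewrite -scale_sign_nat scalerA mulrACA -exprMn mulrNN mulr1 expr1n mulVf ?mul1r ?scale1r //.
by rewrite pnatr_eq0 -lt0n fact_gt0.
Qed.

End DilatedProducts.

Theorem mainTheorem19 (R : comAlgType rat) (f : pser R) (n : nat) :
  f 0%N = 1 ->
  (forall m : nat, (m < n)%N -> Pn f n m = 0) /\
  Pn f n n = (-1) ^+ n * ps_pow f n.+1 n.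
Proof.
move=> _; split=> [m lt_mn|].
  rewrite (Pn_dil_prod_poly f (ltnW lt_mn)) nth_default //.
  exact: leq_trans (size_dil_prod_poly f _ _) lt_mn.
by rewrite (Pn_dil_prod_poly f (leqnn n)) coef_dil_prod_poly size_iota.
Qed.
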